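(* Fix an integer $N\ge 4$, and let $x_1\le x_2\le\dots\le x_k$ be points of $[0,1]$ with $k<\lfloor N/2\rfloor$. Then there exist two distinct CDFs $F_{\vec B}$ and $F_{\vec C}$, both with scale factor $N$, such that $F_{\vec B}(x_n)=F_{\vec C}(x_n)$ for all $n\in\{1,\dots,k\}$.
   Context: A binary digit vector of length (scale factor) $N\ge3$ is $\vec B=(b_0,\dots,b_{N-1})\in\{0,1\}^N$ with $2\le\|\vec B\|:=\sum_i b_i\le N-1$; its digit set is $D=\{i:b_i=1\}$. With $\phi_d(x)=(x+d)/N$ for $d\in D$, let $\mu_{\vec B}$ be the unique Borel probability measure with $\mu_{\vec B}=\frac{1}{\|\vec B\|}\sum_{d\in D}\mu_{\vec B}\circ\phi_d^{-1}$, supported on the attractor $C_{\vec B}\subset[0,1]$. The CDF with scale factor $N$ associated to $\vec B$ is $F_{\vec B}(x)=\mu_{\vec B}([0,x])$, $x\in[0,1]$. *)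

From HB Require Import structures.
From mathcomp Require Import all_boot all_order all_algebra.
From mathcomp Require Import all_classical all_reals all_analysis.
Set Implicit Arguments. Unset Strict Implicit. Unset Printing Implicit Defensive.
Import Order.TTheory GRing.Theory Num.Theory.
Local Open Scope classical_set_scope.
Local Open Scope ring_scope.

Definition digit_vec (N : nat) := {ffun 'I_N -> bool}.

Definition dnorm (N : nat) (B : digit_vec N) : nat := #|[set i | B i]|.

Definition admissible (N : nat) (B : digit_vec N) : Prop :=
  (3 <= N)%N /\ (2 <= dnorm B)%N /\ (dnorm B <= N.-1)%N.

Definition phi (R : realType) (N : nat) (d : nat) (x : R) : R :=
  (x + d%:R) / N%:R.

Definition selfsim (R : realType) (N : nat) (B : digit_vec N)
    (mu : probability R R) : Prop :=
  forall A : set R, measurable A ->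
    mu A = (\sum_(d < N | B d)
              (((dnorm B)%:R : R)^-1)%:E * mu (phi N d @^-1` A))%E.

Definition bcdf (R : realType) (mu : probability R R) (x : R) : R :=
  fine (mu [set y | 0 <= y <= x]).

From HB Require Import structures.
From mathcomp Require Import all_boot all_order all_algebra.
From mathcomp Require Import all_classical all_reals all_analysis.
From mathcomp Require Import lra zify measurable_realfun.
Import Order.TTheory GRing.Theory Num.Theory.
Local Open Scope classical_set_scope.
Local Open Scope ring_scope.

(* Take the digit sets {e, g} and {e+1, g}, where e, e+1 and g avoid every
   floor(N x_i); such digits exist because k < N/2.  A self-similar measure gives
   no mass to the complement of [0,1]: the complement O_r of [-r, 1+r] satisfies
   mu(O_r) <= mu(O_(N r)), and these sets shrink to the empty set.  Hence in the
   self-similarity equation F(x) = 1/||B|| sum_(d in D) mu(phi_d^-1 [0,x]) every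
   term with d <> floor(N x) is 1 if d < floor(N x) and 0 otherwise, so at each x_i
   the digits e and e+1 contribute alike.  At y = (e+1)/N the digit e contributes 1
   for {e, g}, whereas the digit e+1 contributes at most 1/2 for {e+1, g}. *)

Lemma exists_notin (s : seq nat) n : (size s < n)%N -> exists2 m, (m < n)%N & m \notin s.
Proof.
move=> s_lt; have [/hasP[m]|/hasPn s_full] := boolP (has (fun m => m \notin s) (iota 0 n)).
  by rewrite mem_iota => m_lt m_free; exists m.
have := uniq_leq_size (iota_uniq 0 n) (fun m m_in => negbNE (s_full m m_in)).
by rewrite size_iota leqNgt s_lt.
Qed.

Lemma exists_consecutive_notin (s : seq nat) n : (size s < n./2)%N ->
  exists e, [/\ (e.+1 < n)%N, e \notin s & e.+1 \notin s].
Proof.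
move=> s_lt; have [|t t_lt t_free] := @exists_notin [seq m./2 | m <- s] n./2.
  by rewrite size_map.
exists t.*2; split; first lia.
  by apply: contra t_free => t_in; apply/mapP; exists t.*2; rewrite ?doubleK.
by apply: contra t_free => t_in; apply/mapP; exists t.*2.+1; rewrite //= uphalf_double.
Qed.

Section outside.
Context {R : realType}.

Definition outside (r : R) : set R := [set y | y < - r \/ 1 + r < y].

Lemma measurable_outside (r : R) : measurable (outside r).
Proof.
have -> : outside r = [set` `]-oo, - r[] `|` [set` `]1 + r, +oo[].
  by apply/seteqP; split => y /=; rewrite !in_itv /= ?andbT.
by apply: measurableU; apply: measurable_itv.
Qed.

Lemma subset_outside (r s : R) : r <= s -> outside s `<=` outside r.
Proof. by move=> rs y [y_lt|y_gt]; [left|right]; lra. Qed.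

Lemma bigcap_outside (r : R) : 0 < r -> \bigcap_n outside (n%:R * r) = set0.
Proof.
move=> r_gt0; apply/seteqP; split => // y /= y_out.
have := y_out (Num.truncn (`|y| / r)).+1 I.
have := truncnS_gt (`|y| / r); rewrite ltr_pdivrMr // => y_lt.
have := ler_norm y; have : - y <= `|y| by rewrite -normrN ler_norm.
by move=> ? ? []; lra.
Qed.

Lemma measurable_segment0 (x : R) : measurable [set y : R | 0 <= y <= x].
Proof.
have -> : [set y : R | 0 <= y <= x] = [set` `[0, x]].
  by apply/seteqP; split => y /=; rewrite in_itv.
exact: measurable_itv.
Qed.

Lemma measurable_preimage_phi N d (A : set R) :
  measurable A -> measurable (phi N d @^-1` A).
Proof.
move=> mA; rewrite -[_ @^-1` _]setTI; apply: (_ : measurable_fun setT (phi N d)) => //.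
by apply: measurable_funM => //; apply: measurable_funD.
Qed.

Lemma preimage_phi_outside N d (r : R) : (d < N)%N -> 0 <= r ->
  phi N d @^-1` outside r `<=` outside (N%:R * r).
Proof.
move=> dN r_ge0 y; rewrite /phi /outside /=.
have N_gt0 : 0 < N%:R :> R by rewrite ltr0n; apply: leq_ltn_trans dN.
have dN' : d%:R + 1 <= N%:R :> R by rewrite natr1 ler_nat.
have d_ge0 : 0 <= d%:R :> R by rewrite ler0n.
rewrite ltr_pdivrMr // ltr_pdivlMr //; case=> ?; [left|right]; nra.
Qed.

End outside.

Section self_similar.
Context {R : realType} {N : nat} {B : digit_vec N} {mu : probability R R}.
Hypotheses (N_gt1 : (1 < N)%N) (B_gt0 : (0 < dnorm B)%N) (mu_selfsim : selfsim B mu).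

Lemma selfsim_fine (A : set R) : measurable A ->
  fine (mu A) = \sum_(d < N | B d) (dnorm B)%:R^-1 * fine (mu (phi N d @^-1` A)).
Proof.
move=> mA; rewrite mu_selfsim // (eq_bigr (fun d : 'I_N =>
  ((dnorm B)%:R^-1 * fine (mu (phi N d @^-1` A)))%:E)) ?sumEFin // => d _.
by rewrite EFinM fineK // fin_num_measure //; exact: measurable_preimage_phi.
Qed.

Lemma selfsim_avg_const (c : R) : \sum_(d < N | B d) (dnorm B)%:R^-1 * c = c.
Proof.
rewrite (eq_bigl (fun d => d \in [set i | B i])); last first.
  by move=> d; apply/idP/idP => [/mem_set|/set_mem].
rewrite -big_distrr /= sumr_const -[c *+ _]mulr_natr mulrCA mulVf ?mulr1 //.
by rewrite pnatr_eq0 -lt0n.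
Qed.

Lemma selfsim_le (A C : set R) : measurable A -> measurable C ->
  (forall d : 'I_N, B d -> phi N d @^-1` A `<=` C) -> (mu A <= mu C)%E.
Proof.
move=> mA mC AC; rewrite -(fineK (fin_num_measure mu A mA)).
rewrite -(fineK (fin_num_measure mu C mC)) lee_fin selfsim_fine //.
rewrite -[leRHS](selfsim_avg_const (fine (mu C))).
apply: ler_sum => d Bd; rewrite ler_wpM2l ?invr_ge0 ?ler0n //.
have mAd : measurable (phi N d @^-1` A) by exact: measurable_preimage_phi.
by apply: fine_le; rewrite ?fin_num_measure ?le_measure ?inE //; exact: AC.
Qed.

Lemma outside_expand (r : R) : 0 <= r ->
  (mu (outside r) <= mu (outside (N%:R * r)))%E.
Proof.
move=> r_ge0; apply: selfsim_le; try exact: measurable_outside.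
by move=> d _; exact: preimage_phi_outside.
Qed.

Lemma outside_expand_iter (r : R) n : 0 <= r ->
  (mu (outside r) <= mu (outside (N%:R ^+ n * r)))%E.
Proof.
move=> r_ge0; elim: n => [|n IH]; first by rewrite expr0 mul1r.
rewrite exprS -mulrA; apply: (le_trans IH); apply: outside_expand.
by rewrite mulr_ge0 ?exprn_ge0.
Qed.

Lemma selfsim_outside_null (r : R) : 0 < r -> mu (outside r) = 0%E.
Proof.
move=> r_gt0; pose F n := outside (n%:R * r).
have mF n : measurable (F n) by exact: measurable_outside.
have F_dec : nonincreasing_seq F.
  by move=> n m nm; rewrite subsetEset; apply: subset_outside; rewrite ler_pM2r // ler_nat.
have muF_cvg : mu \o F @ \oo --> 0%E.
  rewrite -(measure0 mu) -(bigcap_outside _ r_gt0).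
  apply: nonincreasing_cvg_mu => //; last by rewrite bigcap_outside.
  by have /fin_numPlt/andP[] := fin_num_measure mu _ (mF 0%N).
apply/eqP; rewrite eq_le measure_ge0 andbT -(cvg_lim _ muF_cvg) //.
apply: lime_ge; first by apply/cvg_ex; exists 0%E.
apply: nearW => n /=; apply: le_trans (outside_expand_iter r n (ltW r_gt0)) _.
apply: le_measure; rewrite ?inE; try exact: measurable_outside.
apply: subset_outside; rewrite ler_pM2r // -natrX ler_nat; exact/ltnW/ltn_expl.
Qed.

Lemma selfsim_outside0_null : mu (outside 0) = 0%E.
Proof.
have -> : outside 0 = \bigcup_n outside (n.+1%:R^-1 : R).
  apply/seteqP; split => [y|y [n _]]; last by apply: subset_outside; rewrite invr_ge0.
  have small_inv (t : R) : 0 < t -> exists n, n.+1%:R^-1 < t.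
    move=> t_gt0; exists (Num.truncn t^-1).
    by rewrite invf_plt ?posrE ?ltr0n // truncnS_gt.
  rewrite /outside oppr0 addr0 /= => -[y_lt|y_gt].
    have [|n n_lt] := small_inv (- y); first lra.
    by exists n => //; left; move: n_lt; set u := _^-1; lra.
  have [|n n_lt] := small_inv (y - 1); first lra.
  by exists n => //; right; move: n_lt; set u := _^-1; lra.
apply/negligibleP; first by apply: bigcupT_measurable => n; exact: measurable_outside.
apply: negligible_bigcup => n; apply/negligibleP; first exact: measurable_outside.
by apply: selfsim_outside_null; rewrite invr_gt0.
Qed.

Lemma selfsim_null (S : set R) : measurable S -> S `<=` outside 0 -> mu S = 0%E.
Proof.
move=> mS S_out; apply: subset_measure0 S_out selfsim_outside0_null => //.
exact: measurable_outside.
Qed.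

Lemma selfsim_full (S : set R) : measurable S -> [set y | 0 <= y <= 1] `<=` S -> mu S = 1%E.
Proof.
move=> mS unit_S; have mCS := measurableC mS.
rewrite -[S]setCK probability_setC ?selfsim_null ?sube0 // => y /= y_notin.
rewrite /outside oppr0 addr0 /=.
have [y_lt0|y_ge0] := ltP y 0; first by left.
have [y_gt1|y_le1] := ltP 1 y; first by right.
by case: y_notin; apply: unit_S; rewrite /= y_ge0 y_le1.
Qed.

Lemma selfsim_digit_term (d : nat) (x : R) : (d < N)%N -> 0 <= x ->
  d != Num.truncn (N%:R * x) ->
  fine (mu (phi N d @^-1` [set y | 0 <= y <= x])) = (d < Num.truncn (N%:R * x))%N%:R.
Proof.
move=> dN x_ge0 d_neq; have Nx_ge0 : 0 <= N%:R * x by rewrite mulr_ge0.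
have N_gt0 : 0 < N%:R :> R by rewrite ltr0n ltnW.
have d_ge0 : 0 <= d%:R :> R by [].
have mS : measurable (phi N d @^-1` [set y | 0 <= y <= x]).
  exact: measurable_preimage_phi (measurable_segment0 x).
case: ltnP => [d_lt|d_ge].
  rewrite selfsim_full // => y /andP[y_ge0 y_le1]; rewrite /phi /= divr_ge0 ?addr_ge0 //=.
  have : d.+1%:R <= N%:R * x by rewrite -truncn_ge_nat.
  by rewrite ler_pdivrMr // -natr1; nra.
rewrite selfsim_null // => y /andP[_]; rewrite /outside oppr0 /phi /= ler_pdivrMr // => y_le.
have : N%:R * x < d%:R by rewrite -truncn_lt_nat // ltn_neqAle eq_sym d_neq.
by left; nra.
Qed.

Lemma bcdf_selfsim (x : R) : 0 <= x ->
  (forall d : 'I_N, B d -> val d != Num.truncn (N%:R * x)) ->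
  bcdf mu x = \sum_(d < N | B d) (dnorm B)%:R^-1 * (d < Num.truncn (N%:R * x))%N%:R.
Proof.
move=> x_ge0 B_avoid; rewrite /bcdf selfsim_fine; last exact: measurable_segment0.
by apply: eq_bigr => d Bd; rewrite selfsim_digit_term ?B_avoid.
Qed.

End self_similar.

Definition digits2 (N e g : nat) : digit_vec N :=
  [ffun d : 'I_N => (val d == e) || (val d == g)].

Lemma sum_digits2 {V : nmodType} N e g (F : 'I_N -> V) (eN : (e < N)%N) (gN : (g < N)%N) :
  e != g -> \sum_(d < N | digits2 N e g d) F d = F (Ordinal eN) + F (Ordinal gN).
Proof.
move=> e_neq_g; rewrite (bigD1 (Ordinal eN)) /= ?ffunE ?eqxx //.
congr (_ + _); rewrite (big_pred1 (Ordinal gN)) // => d /=.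
rewrite ffunE -!val_eqE /=; case: eqP => [->|_] /=; last by rewrite andbT.
by rewrite (negbTE e_neq_g).
Qed.

Lemma dnorm_digits2 N e g : (e < N)%N -> (g < N)%N -> e != g -> dnorm (digits2 N e g) = 2.
Proof.
move=> eN gN e_neq_g; rewrite /dnorm -sum1_card.
rewrite (eq_bigl (fun d => digits2 N e g d)) => [|d]; last first.
  by apply/idP/idP => [/set_mem|/mem_set].
exact: (@sum_digits2 nat N e g (fun=> 1%N)).
Qed.

Lemma admissible_digits2 N e g : (3 <= N)%N -> (e < N)%N -> (g < N)%N -> e != g ->
  admissible (digits2 N e g).
Proof. by move=> N_ge3 eN gN e_neq_g; rewrite /admissible dnorm_digits2 //; lia. Qed.

Section shift_digit.
Context {R : realType} {N e g : nat} {muB muC : probability R R}.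
Hypotheses (e1N : (e.+1 < N)%N) (gN : (g < N)%N) (g_neq_e : g != e) (g_neq_e1 : g != e.+1).
Hypotheses (muB_selfsim : selfsim (digits2 N e g) muB)
  (muC_selfsim : selfsim (digits2 N e.+1 g) muC).

Let eN : (e < N)%N := ltnW e1N.
Let N_gt1 : (1 < N)%N := leq_ltn_trans (ltn0Sn e) e1N.
Let B_gt0 : (0 < dnorm (digits2 N e g))%N. Proof. by rewrite dnorm_digits2 // eq_sym. Qed.
Let C_gt0 : (0 < dnorm (digits2 N e.+1 g))%N. Proof. by rewrite dnorm_digits2 // eq_sym. Qed.
Let N_gt0 : 0 < N%:R :> R. Proof. by rewrite ltr0n ltnW. Qed.

Lemma bcdf_shift_digit_eq (x : R) : 0 <= x ->
  Num.truncn (N%:R * x) \notin [:: e; e.+1; g] -> bcdf muB x = bcdf muC x.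
Proof.
move=> x_ge0; rewrite !inE => /norP[j_neq_e /norP[j_neq_e1 j_neq_g]].
rewrite (bcdf_selfsim N_gt1 B_gt0 muB_selfsim _ x_ge0); last first.
  by move=> d; rewrite ffunE => /orP[]/eqP->; rewrite eq_sym.
rewrite (bcdf_selfsim N_gt1 C_gt0 muC_selfsim _ x_ge0); last first.
  by move=> d; rewrite ffunE => /orP[]/eqP->; rewrite eq_sym.
set j := Num.truncn _; rewrite !dnorm_digits2 // 1?eq_sym //.
rewrite !sum_digits2 // 1?eq_sym //=.
by rewrite [(e < j)%N]leq_eqVlt eq_sym (negbTE j_neq_e1).
Qed.

(* The preimage under phi_(e+1) of this set lies in the negative half-line, which
   muC does not charge, so only the digit g contributes. *)
Lemma shift_digit_atom :
  fine (muC (phi N e.+1 @^-1` [set y | 0 <= y <= e.+1%:R / N%:R])) <= 2^-1.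
Proof.
set S := phi N e.+1 @^-1` _.
have mS : measurable S by exact: measurable_preimage_phi (measurable_segment0 _).
have mS' : measurable (phi N e.+1 @^-1` S) by exact: measurable_preimage_phi.
rewrite (selfsim_fine muC_selfsim) // sum_digits2 // 1?eq_sym //.
rewrite dnorm_digits2 // 1?eq_sym // (selfsim_null N_gt1 C_gt0 muC_selfsim _ mS') /=.
  rewrite mulr0 add0r -[leRHS]mulr1 ler_wpM2l ?invr_ge0 // -lee_fin fineK ?fin_num_measure //.
    by apply: probability_le1; exact: measurable_preimage_phi.
  exact: measurable_preimage_phi.
move=> y /andP[_]; rewrite /outside oppr0 /phi /= ler_pM2r ?invr_gt0 // => phi_y_le.
have : (y + e.+1%:R) / N%:R <= 0 by lra.
rewrite pmulr_lle0 ?invr_gt0 // => y_le; left.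
have e1_gt0 : 0 < e.+1%:R :> R by rewrite ltr0n.
lra.
Qed.

Lemma bcdf_shift_digit_lt : bcdf muC (e.+1%:R / N%:R) < bcdf muB (e.+1%:R / N%:R).
Proof.
have y_ge0 : 0 <= e.+1%:R / N%:R :> R by rewrite divr_ge0.
have j_y : Num.truncn (N%:R * (e.+1%:R / N%:R) : R) = e.+1.
  by rewrite mulrC divfK ?gt_eqF // natrK.
rewrite (bcdf_selfsim N_gt1 B_gt0 muB_selfsim _ y_ge0); last first.
  by move=> d; rewrite ffunE j_y => /orP[]/eqP->; rewrite // neq_ltn ltnSn.
rewrite /bcdf (selfsim_fine muC_selfsim); last exact: measurable_segment0.
rewrite !sum_digits2 // 1?eq_sym // !dnorm_digits2 // 1?eq_sym //=.
rewrite (selfsim_digit_term N_gt1 C_gt0 muC_selfsim g) ?j_y // ltnSn.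
have := shift_digit_atom; have : 0 <= (g < e.+1)%N%:R :> R by [].
move=> /=; lra.
Qed.

End shift_digit.

Theorem lemma2p5 (R : realType) (N k : nat) (x : 'I_k -> R) :
  (4 <= N)%N ->
  (k < N./2)%N ->
  (forall i, 0 <= x i <= 1) ->
  (forall i j : 'I_k, (i <= j)%N -> x i <= x j) ->
  exists B C : digit_vec N, admissible B /\ admissible C /\
    forall (muB muC : probability R R), selfsim B muB -> selfsim C muC ->
      (exists y : R, 0 <= y <= 1 /\ bcdf muB y <> bcdf muC y) /\
      (forall i, bcdf muB (x i) = bcdf muC (x i)).
Proof.
move=> N_ge4 k_lt x01 _; pose j i := Num.truncn (N%:R * x i).
have [|e [e1N e_free e1_free]] := @exists_consecutive_notin (codom j) N.
  by rewrite size_codom card_ord.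
have [|g gN] := @exists_notin [:: e, e.+1 & codom j] N.
  by rewrite /= size_codom card_ord; lia.
rewrite !inE => /norP[g_neq_e /norP[g_neq_e1 g_free]].
exists (digits2 N e g), (digits2 N e.+1 g); split; [|split].
- by apply: admissible_digits2; rewrite 1?eq_sym //; lia.
- by apply: admissible_digits2; rewrite 1?eq_sym //; lia.
move=> muB muC muB_selfsim muC_selfsim; split.
  exists (e.+1%:R / N%:R); split.
    by rewrite divr_ge0 //= ler_pdivrMr ?ltr0n ?mul1r ?ler_nat //; lia.
  by apply/eqP; rewrite gt_eqF //; exact: (bcdf_shift_digit_lt e1N gN).
move=> i; have /andP[x_ge0 _] := x01 i; apply: (bcdf_shift_digit_eq e1N gN) => //.
apply/negP; rewrite !inE => /or3P[]/eqP j_eq;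
  [move: e_free | move: e1_free | move: g_free]; by rewrite -j_eq codom_f.
Qed.
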